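(* Let $\mathcal{T}=\begin{pmatrix}\mathcal{A}&\mathcal{M}\\0&\mathcal{B}\end{pmatrix}$ be a triangular ring in which $\mathcal{A}$ and $\mathcal{B}$ are 2-torsion free. If $\phi:\mathcal{T}\to\mathcal{T}$ is an additive mapping such that $\phi(U)\circ V+U\circ\phi(V)=0$ for all $U,V\in\mathcal{T}$ with $UV=VU=0$, then there exist a derivation $\delta:\mathcal{T}\to\mathcal{T}$ and a multiplier $\eta:\mathcal{T}\to\mathcal{T}$ such that $\phi=\delta+\eta$. If moreover $\phi(I)=0$, then $\phi$ is a derivation.
   Context: A triangular ring: $\mathcal{A},\mathcal{B}$ are unital rings and $\mathcal{M}$ is a unital $(\mathcal{A},\mathcal{B})$-bimodule faithful on both sides (if $A\mathcal{M}=\{0\}$ then $A=0$; if $\mathcal{M}B=\{0\}$ then $B=0$); $\mathcal{T}$ is the set of matrices $\begin{pmatrix}A&M\\0&B\end{pmatrix}$ under usual matrix operations, with identity $I$. 2-torsion free: $2X=0\Rightarrow X=0$. $X\circ Y=XY+YX$. An additive $\delta$ is a derivation if $\delta(XY)=\delta(X)Y+X\delta(Y)$; an additive $\eta$ is a multiplier if $\eta(X)=\eta(I)X=X\eta(I)$ for all $X$. *)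

From HB Require Import structures.
From mathcomp Require Import all_boot all_order all_algebra.
Set Implicit Arguments. Unset Strict Implicit. Unset Printing Implicit Defensive.
Import GRing.Theory.
Local Open Scope ring_scope.

Definition is_bimodule (A B : pzRingType) (M : zmodType)
    (la : A -> M -> M) (ra : M -> B -> M) : Prop :=
  (forall a m m', la a (m + m') = la a m + la a m') /\
  (forall a a' m, la (a + a') m = la a m + la a' m) /\
  (forall a a' m, la (a * a') m = la a (la a' m)) /\
  (forall m, la 1 m = m) /\
  (forall m m' b, ra (m + m') b = ra m b + ra m' b) /\
  (forall m b b', ra m (b + b') = ra m b + ra m b') /\
  (forall m b b', ra m (b * b') = ra (ra m b) b') /\
  (forall m, ra m 1 = m) /\
  (forall a m b, ra (la a m) b = la a (ra m b)).

Definition bimod_faithful (A B : pzRingType) (M : zmodType)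
    (la : A -> M -> M) (ra : M -> B -> M) : Prop :=
  (forall a, (forall m, la a m = 0) -> a = 0) /\
  (forall b, (forall m, ra m b = 0) -> b = 0).

Definition two_torsion_free (R : zmodType) : Prop :=
  forall x : R, x *+ 2 = 0 -> x = 0.

(* Elements of the triangular ring T = [A M; 0 B]: the matrix [a m; 0 b]. *)
Record tri (A B : pzRingType) (M : zmodType) :=
  Tri { tA : A; tM : M; tB : B }.

Section TriOps.
Variables (A B : pzRingType) (M : zmodType).
Variables (la : A -> M -> M) (ra : M -> B -> M).

Definition tadd (X Y : tri A B M) : tri A B M :=
  Tri (tA X + tA Y) (tM X + tM Y) (tB X + tB Y).

(* usual matrix product:
   [a m; 0 b] [a' m'; 0 b'] = [a a'  a m' + m b'; 0  b b'] *)
Definition tmul (X Y : tri A B M) : tri A B M :=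
  Tri (tA X * tA Y) (la (tA X) (tM Y) + ra (tM X) (tB Y)) (tB X * tB Y).

Definition tzero : tri A B M := Tri 0 0 0.
Definition tone : tri A B M := Tri 1 0 1.

Definition tcirc (X Y : tri A B M) : tri A B M := tadd (tmul X Y) (tmul Y X).

Definition t_additive (f : tri A B M -> tri A B M) : Prop :=
  forall X Y, f (tadd X Y) = tadd (f X) (f Y).

Definition t_derivation (d : tri A B M -> tri A B M) : Prop :=
  t_additive d /\
  forall X Y, d (tmul X Y) = tadd (tmul (d X) Y) (tmul X (d Y)).

Definition t_multiplier (e : tri A B M -> tri A B M) : Prop :=
  t_additive e /\
  forall X, e X = tmul (e tone) X /\ e X = tmul X (e tone).
End TriOps.

(* Testing the hypothesis on the pairs U = [a m; 0 0], V = [0 n; 0 b], which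
   satisfy UV = VU = 0 as soon as a n + m b = 0, and cancelling factors 2, one
   finds that phi [a m; 0 b] = [phiA a, phiAM a + phiM m + phiBM b; 0, phiB b].
   The same identities give phiAM a = a m0 and phiBM b = - m0 b for m0 = phiAM 1,
   i.e. an inner derivation, and show that C = [phiA 1, 0; 0, phiB 1] is central.
   What is left, phi - [., m0] - C., acts on the corners by maps dA, dM, dB with
   dM (a n) = dA a n + a dM n and dM (m b) = dM m b + m dB b; faithfulness of M
   turns these into the Leibniz rules for dA and dB.  Finally phi I = 0 forces
   C = 0, so that phi is a derivation. *)

From HB Require Import structures.
From mathcomp Require Import all_boot all_order all_algebra ssrAC.
Set Implicit Arguments. Unset Strict Implicit. Unset Printing Implicit Defensive.
Import GRing.Theory.
Local Open Scope ring_scope.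

Section AdditiveMaps.
Variables (U V : zmodType) (f : U -> V).
Hypothesis fD : forall x y, f (x + y) = f x + f y.

Lemma additive_map0 : f 0 = 0.
Proof. by apply: (@addrI _ (f 0)); rewrite -fD !addr0. Qed.

Lemma additive_mapN x : f (- x) = - f x.
Proof. by apply/eqP; rewrite -addr_eq0 -fD addNr additive_map0. Qed.

Lemma additive_mapB x y : f (x - y) = f x - f y.
Proof. by rewrite fD additive_mapN. Qed.
End AdditiveMaps.

Section Bimodule.
Variables (A B : pzRingType) (M : zmodType) (la : A -> M -> M) (ra : M -> B -> M).
Hypothesis hb : is_bimodule la ra.

Lemma laD a m m' : la a (m + m') = la a m + la a m'. Proof. by case: hb. Qed.
Lemma laDl a a' m : la (a + a') m = la a m + la a' m. Proof. by case: hb => _ []. Qed.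
Lemma laM a a' m : la (a * a') m = la a (la a' m). Proof. by case: hb => _ [] _ []. Qed.
Lemma la1 m : la 1 m = m. Proof. by case: hb => _ [] _ [] _ []. Qed.
Lemma raD m m' b : ra (m + m') b = ra m b + ra m' b.
Proof. by case: hb => _ [] _ [] _ [] _ []. Qed.
Lemma raDr m b b' : ra m (b + b') = ra m b + ra m b'.
Proof. by case: hb => _ [] _ [] _ [] _ [] _ []. Qed.
Lemma raM m b b' : ra m (b * b') = ra (ra m b) b'.
Proof. by case: hb => _ [] _ [] _ [] _ [] _ [] _ []. Qed.
Lemma ra1 m : ra m 1 = m. Proof. by case: hb => _ [] _ [] _ [] _ [] _ [] _ [] _ []. Qed.
Lemma ra_la a m b : ra (la a m) b = la a (ra m b).
Proof. by case: hb => _ [] _ [] _ [] _ [] _ [] _ [] _ []. Qed.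

Let laDl_ m a a' := laDl a a' m.
Let raD_ b m m' := raD m m' b.

Lemma la0r a : la a 0 = 0. Proof. exact: additive_map0 (laD a). Qed.
Lemma la0l m : la 0 m = 0. Proof. exact: additive_map0 (laDl_ m). Qed.
Lemma ra0l b : ra 0 b = 0. Proof. exact: additive_map0 (raD_ b). Qed.
Lemma ra0r m : ra m 0 = 0. Proof. exact: additive_map0 (raDr m). Qed.
Lemma laNr a m : la a (- m) = - la a m. Proof. exact: additive_mapN (laD a) m. Qed.
Lemma raNl m b : ra (- m) b = - ra m b. Proof. exact: additive_mapN (raD_ b) m. Qed.
Lemma laB a m m' : la a (m - m') = la a m - la a m'. Proof. exact: additive_mapB (laD a) m m'. Qed.
Lemma laBl a a' m : la (a - a') m = la a m - la a' m.
Proof. exact: additive_mapB (laDl_ m) a a'. Qed.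
Lemma raB m m' b : ra (m - m') b = ra m b - ra m' b. Proof. exact: additive_mapB (raD_ b) m m'. Qed.
Lemma raBr m b b' : ra m (b - b') = ra m b - ra m b'.
Proof. exact: additive_mapB (raDr m) b b'. Qed.

Hypothesis hf : bimod_faithful la ra.

Lemma la_faithful_eq a a' : (forall m, la a m = la a' m) -> a = a'.
Proof.
move=> e; apply/eqP; rewrite -subr_eq0; apply/eqP; apply: hf.1 => m.
by rewrite laBl e subrr.
Qed.

Lemma ra_faithful_eq b b' : (forall m, ra m b = ra m b') -> b = b'.
Proof.
move=> e; apply/eqP; rewrite -subr_eq0; apply/eqP; apply: hf.2 => m.
by rewrite raBr e subrr.
Qed.
End Bimodule.

Lemma twice_eq0 (R : zmodType) (x : R) : two_torsion_free R -> x + x = 0 -> x = 0.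
Proof. by move=> h2 hx; apply: h2; rewrite mulr2n. Qed.

Section TriAlgebra.
Variables (A B : pzRingType) (M : zmodType) (la : A -> M -> M) (ra : M -> B -> M).
Hypothesis hb : is_bimodule la ra.
Local Notation T := (tri A B M).
Local Notation tmul := (tmul la ra).
Local Notation tzero := (tzero A B M).
Local Notation tone := (tone A B M).

Lemma taddACA (X Y Z W : T) : tadd (tadd X Y) (tadd Z W) = tadd (tadd X Z) (tadd Y W).
Proof. by congr Tri; apply: addrACA. Qed.

Lemma taddr0 (X : T) : tadd X tzero = X.
Proof. by case: X => a m b; rewrite /tadd /= !addr0. Qed.

Lemma tadd0r (X : T) : tadd tzero X = X.
Proof. by case: X => a m b; rewrite /tadd /= !add0r. Qed.

Lemma tadd_idem_eq0 (X : T) : tadd X X = X -> X = tzero.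
Proof.
case: X => a m b [ea em eb].
by congr Tri; [apply: (addrI a) | apply: (addrI m) | apply: (addrI b)]; rewrite addr0.
Qed.

Lemma tmulDl (X Y Z : T) : tmul (tadd X Y) Z = tadd (tmul X Z) (tmul Y Z).
Proof.
by rewrite /tmul /tadd /=; congr Tri; rewrite ?mulrDl // (laDl hb) (raD hb) addrACA.
Qed.

Lemma tmulDr (X Y Z : T) : tmul X (tadd Y Z) = tadd (tmul X Y) (tmul X Z).
Proof.
by rewrite /tmul /tadd /=; congr Tri; rewrite ?mulrDr // (laD hb) (raDr hb) addrACA.
Qed.

Lemma tmul1r (X : T) : tmul tone X = X.
Proof. by case: X => a m b; rewrite /tmul /= !mul1r (la1 hb) (ra0l hb) addr0. Qed.

Lemma tmulr1 (X : T) : tmul X tone = X.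
Proof. by case: X => a m b; rewrite /tmul /= !mulr1 (la0r hb) (ra1 hb) add0r. Qed.

Lemma tmul0r (X : T) : tmul tzero X = tzero.
Proof. by rewrite /tmul /= !mul0r (la0l hb) (ra0l hb) addr0. Qed.

Lemma derivation_tone (d : T -> T) : t_derivation la ra d -> d tone = tzero.
Proof.
case=> _ dM; apply: tadd_idem_eq0.
have := dM tone tone; rewrite !tmul1r tmulr1 => e.
by rewrite -e.
Qed.

Lemma derivationD (d1 d2 : T -> T) :
  t_derivation la ra d1 -> t_derivation la ra d2 ->
  t_derivation la ra (fun X => tadd (d1 X) (d2 X)).
Proof.
move=> [d1D d1M] [d2D d2M]; split=> X Y; first by rewrite d1D d2D taddACA.
by rewrite d1M d2M tmulDl tmulDr taddACA.
Qed.

(* The inner derivation [X, E] = X E - E X for E = [0 m0; 0 0]. *)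
Lemma derivation_inner (m0 : M) :
  t_derivation la ra (fun X => Tri 0 (la (tA X) m0 - ra m0 (tB X)) 0).
Proof.
split=> -[a m b] [a' m' b']; rewrite /tadd /tmul /=.
  by rewrite !addr0 (laDl hb) (raDr hb) opprD addrACA.
rewrite !mul0r !mulr0 (la0l hb) (ra0r hb) !addr0 add0r.
rewrite (laM hb) (raM hb) (raB hb) (laB hb) (ra_la hb).
by congr Tri; rewrite [RHS]addrC addrA subrK.
Qed.

Lemma derivation_diag (dA : A -> A) (dM : M -> M) (dB : B -> B) :
  (forall a a', dA (a + a') = dA a + dA a') ->
  (forall m m', dM (m + m') = dM m + dM m') ->
  (forall b b', dB (b + b') = dB b + dB b') ->
  (forall a a', dA (a * a') = dA a * a' + a * dA a') ->
  (forall b b', dB (b * b') = dB b * b' + b * dB b') ->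
  (forall a m, dM (la a m) = la (dA a) m + la a (dM m)) ->
  (forall m b, dM (ra m b) = ra (dM m) b + ra m (dB b)) ->
  t_derivation la ra (fun X => Tri (dA (tA X)) (dM (tM X)) (dB (tB X))).
Proof.
move=> dAD dMD dBD dAM dBM dMl dMr.
split=> -[a m b] [a' m' b']; rewrite /tadd /tmul /=; first by rewrite dAD dMD dBD.
by rewrite dAM dBM dMD dMl dMr addrACA.
Qed.

Lemma multiplier_central (x : A) (y : B) :
  (forall a, x * a = a * x) -> (forall b, y * b = b * y) ->
  (forall m, la x m = ra m y) ->
  t_multiplier la ra (tmul (Tri x 0 y)).
Proof.
move=> cx cy cxy; split=> [X Y|X]; first exact: tmulDr.
rewrite tmulr1; split=> //; case: X => a m b.
by rewrite /tmul /= (ra0l hb) (la0r hb) addr0 add0r cx cy cxy.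
Qed.

Lemma derivation_of_decomposition (phi d e : T -> T) :
  t_derivation la ra d -> t_multiplier la ra e ->
  (forall X, phi X = tadd (d X) (e X)) -> phi tone = tzero ->
  t_derivation la ra phi.
Proof.
move=> hd [eD e1] phiE phi1.
have e0 X : e X = tzero.
  have e10 : e tone = tzero by rewrite -phi1 phiE (derivation_tone hd) tadd0r.
  by rewrite (e1 X).1 e10 tmul0r.
have phid X : phi X = d X by rewrite phiE e0 taddr0.
by case: hd => dD dM; split=> X Y; rewrite !phid.
Qed.
End TriAlgebra.

Section JordanZeroProducts.
Variables (A B : pzRingType) (M : zmodType) (la : A -> M -> M) (ra : M -> B -> M).
Hypothesis hb : is_bimodule la ra.
Hypothesis hfaith : bimod_faithful la ra.
Hypotheses (h2A : two_torsion_free A) (h2B : two_torsion_free B).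
Local Notation T := (tri A B M).
Local Notation tmul := (tmul la ra).
Local Notation tzero := (tzero A B M).

Variable phi : T -> T.
Hypothesis phiD : t_additive phi.
Hypothesis phi_orth : forall U V : T, tmul U V = tzero -> tmul V U = tzero ->
  tadd (tcirc la ra (phi U) V) (tcirc la ra U (phi V)) = tzero.

Lemma phi0 : phi (Tri 0 0 0) = Tri 0 0 0.
Proof. by apply: tadd_idem_eq0; rewrite -phiD taddr0. Qed.

Lemma phi_Tri_split a m b :
  phi (Tri a m b) = tadd (tadd (phi (Tri a 0 0)) (phi (Tri 0 m 0))) (phi (Tri 0 0 b)).
Proof. by rewrite -!phiD /tadd /= !addr0 !add0r. Qed.

(* [a m; 0 0] [0 n; 0 b] = [0, a n + m b; 0 0] while [0 n; 0 b] [a m; 0 0] = 0. *)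
Lemma phi_orth_components a m n b : la a n + ra m b = 0 ->
  let X := phi (Tri a m 0) in let Y := phi (Tri 0 n b) in
  [/\ a * tA Y + tA Y * a = 0,
      la (tA X) n + ra (tM X) b + ra n (tB X)
        + (la a (tM Y) + ra m (tB Y) + la (tA Y) m) = 0
    & tB X * b + b * tB X = 0].
Proof.
move=> h X Y; have := phi_orth (U := Tri a m 0) (V := Tri 0 n b).
rewrite /tmul /tzero /tcirc /tadd /= !mul0r !mulr0 (la0l hb) (ra0r hb) h !addr0.
move=> /(_ erefl erefl) []; rewrite (la0l hb) (ra0r hb) !add0r !addr0.
by split.
Qed.

Lemma tA_phi_B b : tA (phi (Tri 0 0 b)) = 0.
Proof.
have h : la 1 0 + ra 0 b = 0 by rewrite (la0r hb) (ra0l hb) addr0.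
have [+ _ _] := phi_orth_components h; rewrite mul1r mulr1.
exact: twice_eq0.
Qed.

Lemma tB_phi_A a : tB (phi (Tri a 0 0)) = 0.
Proof.
have h : la a 0 + ra 0 1 = 0 by rewrite (la0r hb) (ra0l hb) addr0.
have [_ _ +] := phi_orth_components h; rewrite mul1r mulr1.
exact: twice_eq0.
Qed.

Lemma tA_phi_M n : tA (phi (Tri 0 n 0)) = 0.
Proof.
have h : la 1 n + ra (- n) 1 = 0 by rewrite (la1 hb) (ra1 hb) subrr.
have [+ _ _] := phi_orth_components h; rewrite mul1r mulr1 => /(twice_eq0 h2A).
by rewrite phi_Tri_split phi0 /= tA_phi_B add0r addr0.
Qed.

Lemma tB_phi_M m : tB (phi (Tri 0 m 0)) = 0.
Proof.
have h : la 1 (- m) + ra m 1 = 0 by rewrite (la1 hb) (ra1 hb) addNr.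
have [_ _ +] := phi_orth_components h; rewrite mul1r mulr1 => /(twice_eq0 h2B).
by rewrite phi_Tri_split phi0 /= tB_phi_A add0r addr0.
Qed.

Definition phiA a := tA (phi (Tri a 0 0)).
Definition phiAM a := tM (phi (Tri a 0 0)).
Definition phiM m := tM (phi (Tri 0 m 0)).
Definition phiBM b := tM (phi (Tri 0 0 b)).
Definition phiB b := tB (phi (Tri 0 0 b)).

Lemma phi_TriE a m b :
  phi (Tri a m b) = Tri (phiA a) (phiAM a + phiM m + phiBM b) (phiB b).
Proof.
by rewrite phi_Tri_split /tadd /= tA_phi_M tA_phi_B tB_phi_A tB_phi_M !addr0 !add0r.
Qed.

Lemma phiA_add a a' : phiA (a + a') = phiA a + phiA a'.
Proof. by rewrite /phiA; have := phiD (Tri a 0 0) (Tri a' 0 0); rewrite /tadd /= !addr0 => ->. Qed.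

Lemma phiM_add m m' : phiM (m + m') = phiM m + phiM m'.
Proof. by rewrite /phiM; have := phiD (Tri 0 m 0) (Tri 0 m' 0); rewrite /tadd /= !addr0 => ->. Qed.

Lemma phiB_add b b' : phiB (b + b') = phiB b + phiB b'.
Proof. by rewrite /phiB; have := phiD (Tri 0 0 b) (Tri 0 0 b'); rewrite /tadd /= !addr0 => ->. Qed.

Lemma phi_orth_M a m n b : la a n + ra m b = 0 ->
  la (phiA a) n + ra (phiAM a + phiM m) b + (la a (phiM n + phiBM b) + ra m (phiB b)) = 0.
Proof.
move=> /phi_orth_components [_ + _]; rewrite !phi_TriE /=.
have [-> -> -> ->] : [/\ phiA 0 = 0, phiAM 0 = 0, phiBM 0 = 0 & phiB 0 = 0].
  by rewrite /phiA /phiAM /phiBM /phiB !phi0.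
by rewrite (ra0r hb) (la0l hb) !addr0 add0r.
Qed.

Lemma phiAM_phiBM a b : ra (phiAM a) b + la a (phiBM b) = 0.
Proof.
have h : la a 0 + ra 0 b = 0 by rewrite (la0r hb) (ra0l hb) addr0.
have := phi_orth_M h.
by rewrite (additive_map0 phiM_add) (la0r hb) (ra0l hb) addr0 !add0r addr0.
Qed.

Lemma phiBME b : phiBM b = - ra (phiAM 1) b.
Proof. by apply/eqP; rewrite -addr_eq0 addrC -(la1 hb (phiBM b)) phiAM_phiBM. Qed.

Lemma phiAME a : phiAM a = la a (phiAM 1).
Proof.
apply/eqP; rewrite -subr_eq0 -{1}(ra1 hb (phiAM a)) -(laNr hb) -(ra1 hb (phiAM 1)).
by rewrite -phiBME phiAM_phiBM.
Qed.

Lemma phi_orth_phiM a m n b : la a n + ra m b = 0 ->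
  la (phiA a) n + ra (phiM m) b + (la a (phiM n) + ra m (phiB b)) = 0.
Proof.
move=> /phi_orth_M; rewrite (raD hb) (laD hb).
by rewrite (AC (1*2*(2*1)) ((2*5)*((1*3)*(4*6)))) /= phiAM_phiBM add0r.
Qed.

Lemma phiA1_phiB1 n : la (phiA 1) n = ra n (phiB 1).
Proof.
have h : la 1 n + ra (- n) 1 = 0 by rewrite (la1 hb) (ra1 hb) subrr.
move/eqP: (phi_orth_phiM h); rewrite (additive_mapN phiM_add) (ra1 hb) (raNl hb) (la1 hb).
by rewrite addrA subrK subr_eq0 => /eqP.
Qed.

Definition dA a := phiA a - phiA 1 * a.
Definition dM m := phiM m - la (phiA 1) m.
Definition dB b := phiB b - phiB 1 * b.

Lemma dA_add a a' : dA (a + a') = dA a + dA a'.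
Proof. by rewrite /dA phiA_add mulrDr opprD addrACA. Qed.

Lemma dM_add m m' : dM (m + m') = dM m + dM m'.
Proof. by rewrite /dM phiM_add (laD hb) opprD addrACA. Qed.

Lemma dB_add b b' : dB (b + b') = dB b + dB b'.
Proof. by rewrite /dB phiB_add mulrDr opprD addrACA. Qed.

Lemma dM_la a n : dM (la a n) = la (dA a) n + la a (dM n).
Proof.
have h : la a n + ra (- la a n) 1 = 0 by rewrite (ra1 hb) subrr.
have := phi_orth_phiM h.
rewrite (additive_mapN phiM_add) (ra1 hb) (raNl hb) (ra_la hb) -phiA1_phiB1.
rewrite /dM /dA (laBl hb) (laB hb) (laM hb) => /eqP.
by rewrite addrAC subr_eq0 => /eqP <-; rewrite [RHS]addrAC.
Qed.

Lemma dM_ra m b : dM (ra m b) = ra (dM m) b + ra m (dB b).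
Proof.
have h : la 1 (- ra m b) + ra m b = 0 by rewrite (la1 hb) addNr.
have := phi_orth_phiM h; rewrite (laNr hb) (la1 hb) (additive_mapN phiM_add).
rewrite /dM /dB (raB hb) (raBr hb) (raM hb) -phiA1_phiB1 (ra_la hb) => /eqP.
by rewrite addrCA addrC subr_eq0 => /eqP <-; rewrite [RHS]addrA (addrC (- _)).
Qed.

Lemma dA_mul a a' : dA (a * a') = dA a * a' + a * dA a'.
Proof.
apply: (la_faithful_eq hb hfaith) => n; apply: (addIr (la (a * a') (dM n))).
by rewrite -dM_la (laM hb) !dM_la (laD hb) (laDl hb (dA a * a')) !(laM hb) addrA.
Qed.

Lemma dB_mul b b' : dB (b * b') = dB b * b' + b * dB b'.
Proof.
apply: (ra_faithful_eq hb hfaith) => m; apply: (addrI (ra (dM m) (b * b'))).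
by rewrite -dM_ra (raM hb) !dM_ra (raD hb) (raDr hb _ (dB b * b')) !(raM hb) addrA.
Qed.

Lemma phiA1_central a : phiA 1 * a = a * phiA 1.
Proof.
apply: (la_faithful_eq hb hfaith) => n.
by rewrite !(laM hb) !phiA1_phiB1 (ra_la hb).
Qed.

Lemma phiB1_central b : phiB 1 * b = b * phiB 1.
Proof.
apply: (ra_faithful_eq hb hfaith) => m.
by rewrite !(raM hb) -!phiA1_phiB1 (ra_la hb).
Qed.

Definition delta X :=
  tadd (Tri 0 (la (tA X) (phiAM 1) - ra (phiAM 1) (tB X)) 0)
       (Tri (dA (tA X)) (dM (tM X)) (dB (tB X))).

Definition eta := tmul (Tri (phiA 1) 0 (phiB 1)).

Lemma delta_derivation : t_derivation la ra delta.
Proof.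
apply: (derivationD hb (derivation_inner hb _)).
exact: derivation_diag dA_add dM_add dB_add dA_mul dB_mul dM_la dM_ra.
Qed.

Lemma eta_multiplier : t_multiplier la ra eta.
Proof. exact: (multiplier_central hb phiA1_central phiB1_central phiA1_phiB1). Qed.

Lemma phi_decomposition X : phi X = tadd (delta X) (eta X).
Proof.
case: X => a m b; rewrite phi_TriE phiAME phiBME /delta /eta /tadd /tmul /= /dA /dM /dB.
rewrite (ra0l hb) !addr0 !add0r !subrK; congr Tri.
by rewrite addrA subrK addrAC.
Qed.
End JordanZeroProducts.

Theorem theorem2p11 (A B : pzRingType) (M : zmodType)
    (la : A -> M -> M) (ra : M -> B -> M)
    (hbim : is_bimodule la ra) (hfaith : bimod_faithful la ra)
    (h2A : two_torsion_free A) (h2B : two_torsion_free B)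
    (phi : tri A B M -> tri A B M)
    (hadd : t_additive phi)
    (hphi : forall U V : tri A B M,
        tmul la ra U V = tzero A B M -> tmul la ra V U = tzero A B M ->
        tadd (tcirc la ra (phi U) V) (tcirc la ra U (phi V)) = tzero A B M) :
  (exists delta eta : tri A B M -> tri A B M,
      t_derivation la ra delta /\ t_multiplier la ra eta /\
      forall X, phi X = tadd (delta X) (eta X)) /\
  (phi (tone A B M) = tzero A B M -> t_derivation la ra phi).
Proof.
have hdelta := delta_derivation hbim hfaith h2A h2B hadd hphi.
have heta := eta_multiplier hbim hfaith h2A h2B hadd hphi.
have hdec := phi_decomposition hbim h2A h2B hadd hphi.
split; first by exists (delta la ra phi), (eta la ra phi).
exact: (derivation_of_decomposition hbim hdelta heta hdec).
Qed.
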